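(* Let $\langle M,\mathsf{S}\rangle$ be a sum structure, $x\in M$, and $\mathcal{A}$ a non-empty family of subsets of $M$ such that $x\,\mathsf{S}\,A$ for every $A\in\mathcal{A}$. Then $x\,\mathsf{S}\,\bigcup\mathcal{A}$.
   Context: For a set $M$ and a relation $\mathsf{S}\subseteq M\times\mathcal{P}(M)$ define: $x\sqsubseteq_{\mathsf{S}} y$ iff there is $X\subseteq M$ with $y\,\mathsf{S}\,X$ and $x\in X$; $\mathrm{I}(x)=\{y\in M\mid y\sqsubseteq_{\mathsf{S}} x\}$ and for $A\subseteq M$, $\mathrm{I}(A)=\bigcup_{a\in A}\mathrm{I}(a)$; $x$ s-overlaps $y$ iff there are $X,Y\subseteq M$ with $x\,\mathsf{S}\,X$, $y\,\mathsf{S}\,Y$, $X\cap Y\neq\emptyset$; a set $A\subseteq M$ is pre-dense in $B\subseteq M$ iff for every $b\in B$ there is $a\in A$ such that $a$ s-overlaps $b$. A sum structure is a pair $\langle M,\mathsf{S}\rangle$ satisfying: (S1) for every non-empty $X\subseteq M$ there is $x\in M$ with $x\,\mathsf{S}\,X$; (S2) $x\,\mathsf{S}\,X\wedge y\,\mathsf{S}\,X\to x=y$; (S3) $x\,\mathsf{S}\,X\wedge y\,\mathsf{S}\,Y\wedge x\in Y\to y\,\mathsf{S}\,(X\cup Y)$; (S4) if $x\,\mathsf{S}\,X$, $x\,\mathsf{S}\,Y$ and $y\in Y$, then there are $z\in X$ and $Z,U\subseteq M$ with $z\,\mathsf{S}\,Z$, $y\,\mathsf{S}\,U$ and $Z\cap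 U\neq\emptyset$; (S5) for all $x\in M$ and $X\subseteq M$: if $X$ is pre-dense in $\mathrm{I}(x)$ then $x\,\mathsf{S}\,(\mathrm{I}(x)\cap\mathrm{I}(X))$. *)

Set Implicit Arguments.

Section SumStructure.
Variable M : Type.
Variable S : M -> (M -> Prop) -> Prop.

Definition sqle (x y : M) : Prop := exists X : M -> Prop, S y X /\ X x.

Definition Ix (x : M) : M -> Prop := fun y => sqle y x.

Definition IA (A : M -> Prop) : M -> Prop := fun y => exists a, A a /\ Ix a y.

Definition soverlaps (x y : M) : Prop :=
  exists X Y : M -> Prop, S x X /\ S y Y /\ exists z, X z /\ Y z.

Definition predense (A B : M -> Prop) : Prop :=
  forall b, B b -> exists a, A a /\ soverlaps a b.

Definition setU (X Y : M -> Prop) : M -> Prop := fun z => X z \/ Y z.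
Definition setI (X Y : M -> Prop) : M -> Prop := fun z => X z /\ Y z.

Definition sum_structure : Prop :=
  (forall X : M -> Prop, (exists z, X z) -> exists x, S x X) /\
  (forall x y X, S x X -> S y X -> x = y) /\
  (forall x y X Y, S x X -> S y Y -> Y x -> S y (setU X Y)) /\
  (forall x y X Y, S x X -> S x Y -> Y y ->
     exists z, X z /\ exists Z U : M -> Prop, S z Z /\ S y U /\ exists w, Z w /\ U w) /\
  (forall x X, predense X (Ix x) -> S x (setI (Ix x) (IA X))).

End SumStructure.

Definition bigU (M : Type) (F : (M -> Prop) -> Prop) : M -> Prop :=
  fun z => exists A, F A /\ A z.

(** Let U be the union of the family. If U is empty it equals every member.
    Otherwise let y be the sum of U. Both x and y are sums of I(U): each is
    the sum of a subset of U that bounds all of U from above, so S4 makes U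
    pre-dense in its ideal, S5 makes it the sum of its ideal cut down to
    I(U), and that cut is all of I(U) by transitivity of the part-of
    relation (S3). Uniqueness of sums (S2) then gives x = y. *)
From Stdlib Require Import Classical FunctionalExtensionality PropExtensionality.

Lemma set_ext (M : Type) (P Q : M -> Prop) : (forall z, P z <-> Q z) -> P = Q.
Proof.
  intros HPQ; apply functional_extensionality; intro z.
  apply propositional_extensionality; apply HPQ.
Qed.

Section SumStructureFacts.

Variable M : Type.
Variable S : M -> (M -> Prop) -> Prop.

Hypothesis S3 : forall x y X Y, S x X -> S y Y -> Y x -> S y (setU X Y).
Hypothesis S4 : forall x y X Y, S x X -> S x Y -> Y y ->
  exists z, X z /\ exists Z U : M -> Prop, S z Z /\ S y U /\ exists w, Z w /\ U w.
Hypothesis S5 : forall x X, predense S X (Ix S x) -> S x (setI (Ix S x) (IA S X)).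

Lemma sqle_trans {a b c : M} : sqle S a b -> sqle S b c -> sqle S a c.
Proof.
  intros [A [HbA Aa]] [B [HcB Bb]].
  exists (setU A B); split.
  - exact (S3 _ _ _ _ HbA HcB Bb).
  - left; exact Aa.
Qed.

Lemma IA_sub_Ix {w : M} {Y : M -> Prop} :
  (forall a, Y a -> sqle S a w) -> forall z, IA S Y z -> Ix S w z.
Proof. intros Hbelow z [a [Ya Hza]]; exact (sqle_trans Hza (Hbelow a Ya)). Qed.

Lemma predense_Ix_of_sum {w : M} {X Y : M -> Prop} :
  S w X -> (forall z, X z -> Y z) -> predense S Y (Ix S w).
Proof.
  intros HwX HXY b [B [HwB Bb]].
  destruct (S4 _ _ _ _ HwX HwB Bb) as [z [Xz [Z [U [HzZ [HbU HZU]]]]]].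
  exists z; split.
  - exact (HXY z Xz).
  - exists Z, U; auto.
Qed.

Lemma sum_IA_of_upper_bound {w : M} {X Y : M -> Prop} :
  S w X -> (forall z, X z -> Y z) -> (forall a, Y a -> sqle S a w) ->
  S w (IA S Y).
Proof.
  intros HwX HXY Hbelow.
  replace (IA S Y) with (setI (Ix S w) (IA S Y)).
  - exact (S5 _ _ (predense_Ix_of_sum HwX HXY)).
  - apply set_ext; intro z; split.
    + intros [_ HYz]; exact HYz.
    + intros HYz; split; [exact (IA_sub_Ix Hbelow z HYz) | exact HYz].
Qed.

End SumStructureFacts.

Theorem theorem3p8 (M : Type) (S : M -> (M -> Prop) -> Prop)
  (HS : sum_structure S) (x : M) (F : (M -> Prop) -> Prop)
  (Fne : exists A, F A) (HF : forall A, F A -> S x A) :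
  S x (bigU F).
Proof.
  destruct HS as [S1 [S2 [S3 [S4 S5]]]].
  destruct Fne as [A0 FA0].
  assert (A0_sub_U : forall z, A0 z -> bigU F z).
  { intros z A0z; exists A0; auto. }
  destruct (classic (exists z, bigU F z)) as [Une | Uempty].
  - destruct (S1 _ Une) as [y HyU].
    assert (HxI : S x (IA S (bigU F))).
    { apply (sum_IA_of_upper_bound _ _ S3 S4 S5 (HF A0 FA0) A0_sub_U).
      intros a [A [FA Aa]]; exists A; auto. }
    assert (HyI : S y (IA S (bigU F))).
    { apply (sum_IA_of_upper_bound _ _ S3 S4 S5 HyU (fun z Uz => Uz)).
      intros a Ua; exists (bigU F); auto. }
    rewrite (S2 _ _ _ HxI HyI); exact HyU.
  - replace (bigU F) with A0; [exact (HF A0 FA0)|].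
    apply set_ext; intro z; split; [apply A0_sub_U|].
    intros Uz; exfalso; apply Uempty; exists z; exact Uz.
Qed.
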